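(* Let $N>1$ and let the parameter space $\Theta$ of the correlated Bernoulli random graph model be nondegenerate. Then there does not exist an unbiased estimator of the total correlation $\varrho_T$, i.e. there is no statistic $S:\mathcal{X}\to\mathbb{R}$ with $\mathbb{E}_\theta(S)=\varrho_T(\theta)$ for all $\theta\in\Theta$.
   Context: Correlated Bernoulli random graph model: fix a positive integer $N$ and let $\mathcal{R}=\{(p_1,\dots,p_N,\varrho_1,\dots,\varrho_N): p_i,\varrho_i\in[0,1]\}$; a parameter space is any $\Theta\subseteq\mathcal{R}$. For $\theta\in\Theta$, the pairs $(X_i,Y_i)$, $i=1,\dots,N$, of $\{0,1\}$-valued random variables are independent, $X_i,Y_i$ are marginally Bernoulli$(p_i)$ with Pearson correlation $\varrho_i$ (so $\mathbb{P}(X_i=Y_i=1)=p_i^2+\varrho_ip_i(1-p_i)$, $\mathbb{P}(X_i=Y_i=0)=(1-p_i)^2+\varrho_ip_i(1-p_i)$, $\mathbb{P}(X_i=1,Y_i=0)=\mathbb{P}(X_i=0,Y_i=1)=(1-\varrho_i)p_i(1-p_i)$). Sample space $\mathcal{X}=\{(x,y):x,y\in\{0,1\}^N\}$. Let $\mathcal{R}^o=\{(p_1,\dots,p_N,0,\dots,0):p_i\in\mathbb{R}\}$; $\Theta$ is nondegenerate if $\Theta\cap\mathcal{R}^o$ has an interior point relative to $\mathcal{R}^o$. Let $\mu=\frac1N\sum_i p_i$. The total correlation is $\varrho_T=1-\frac{\sum_{i=1}^N(1-\varrho_i)p_i(1-p_i)}{N\mu(1-\mu)}$ when $0<\mu<1$;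 when $\mu\in\{0,1\}$ it is defined by an arbitrary convention with value in $[0,1]$. *)

From HB Require Import structures.
From mathcomp Require Import all_boot all_order all_algebra.
From mathcomp Require Import reals.
Set Implicit Arguments. Unset Strict Implicit. Unset Printing Implicit Defensive.
Import Order.TTheory GRing.Theory Num.Theory.
Local Open Scope ring_scope.

(* A parameter theta = (p, rho) with p, rho : 'I_N -> R. *)
Definition param (R : realType) (N : nat) : Type := (('I_N -> R) * ('I_N -> R))%type.

Definition Rspace (R : realType) (N : nat) (th : param R N) : Prop :=
  forall i : 'I_N, 0 <= th.1 i <= 1 /\ 0 <= th.2 i <= 1.

(* Nondegenerate: Theta ∩ R^o has an interior point relative to
   R^o = {(p, 0) : p in R^N} (product topology, i.e. sup-norm balls). *)
Definition nondegenerate_param (R : realType) (N : nat) (Theta : param R N -> Prop) : Prop :=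
  exists (p0 : 'I_N -> R) (e : R), 0 < e /\
    forall p : 'I_N -> R, (forall i, `|p i - p0 i| < e) -> Theta (p, fun _ => 0).

Definition pair_pmf (R : realType) (p rho : R) (a b : bool) : R :=
  match a, b with
  | true, true => p ^+ 2 + rho * p * (1 - p)
  | false, false => (1 - p) ^+ 2 + rho * p * (1 - p)
  | _, _ => (1 - rho) * p * (1 - p)
  end.

Definition sample (N : nat) : finType :=
  ({ffun 'I_N -> bool} * {ffun 'I_N -> bool})%type.

Definition prob (R : realType) (N : nat) (th : param R N) (z : sample N) : R :=
  \prod_(i < N) pair_pmf (th.1 i) (th.2 i) (z.1 i) (z.2 i).

Definition expect (R : realType) (N : nat) (th : param R N) (S : sample N -> R) : R :=
  \sum_(z : sample N) S z * prob th z.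

Definition mu (R : realType) (N : nat) (th : param R N) : R :=
  (\sum_(i < N) th.1 i) / N%:R.

(* Total correlation; [conv] is the arbitrary convention used when mu ∈ {0,1}. *)
Definition total_corr (R : realType) (N : nat) (conv : param R N -> R)
  (th : param R N) : R :=
  if (0 < mu th) && (mu th < 1) then
    1 - (\sum_(i < N) (1 - th.2 i) * th.1 i * (1 - th.1 i))
          / (N%:R * mu th * (1 - mu th))
  else conv th.

(** Take b non-constant with the line p = b + t, ρ = 0 inside Θ for small |t|
   (nondegeneracy). Along it E(S) is a polynomial in t, and ϱ_T = 1 - A/D with
   A(t) = Σ p_i (1 - p_i) and D(t) = N μ (1 - μ) also polynomial. Unbiasedness
   makes E·D - D + A vanish on an interval, hence identically. At t = -mean b
   the factor μ of D vanishes, so A(-mean b) = -Σ (b_i - mean b)^2 = 0 and b is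
   constant. *)
From HB Require Import structures.
From mathcomp Require Import all_boot all_order all_algebra.
From mathcomp Require Import reals.
From mathcomp Require Import ring lra.
Set Implicit Arguments. Unset Strict Implicit.
Import Order.TTheory GRing.Theory Num.Theory.
Local Open Scope ring_scope.

Lemma poly_eq0_near0 (R : realFieldType) (q : {poly R}) (d : R) :
  0 < d -> (forall t, `|t| < d -> q.[t] = 0) -> q = 0.
Proof.
move=> d_gt0 q0; pose rs := mkseq (fun k => d / k.+2%:R) (size q).
apply: (@roots_geq_poly_eq0 _ _ rs); last by rewrite size_mkseq.
- apply/allP => _ /mapP[k _ ->]; apply/rootP/q0.
  by rewrite ger0_norm ?divr_ge0 ?ltW // ltr_pdivrMr // ltr_pMr // ltr1n.
- apply: mkseq_uniq => k l /(mulfI (lt0r_neq0 d_gt0))/invr_inj/eqP.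
  by rewrite eqr_nat => /eqP [].
Qed.

Lemma sum_sqr_sub_eq0 (R : realFieldType) (I : finType) (x : I -> R) (c : R) :
  \sum_i (x i - c) ^+ 2 = 0 -> forall i, x i = c.
Proof.
move=> sq0 i; apply/eqP; rewrite -subr_eq0 -sqrf_eq0; apply/eqP.
exact: (psumr_eq0P (fun k _ => sqr_ge0 (x k - c)) sq0).
Qed.

Section Mean.
Variables (R : realFieldType) (N : nat).
Hypothesis N_gt0 : (0 < N)%N.

Definition mean (x : 'I_N -> R) : R := (\sum_i x i) / N%:R.

Let N_neq0 : N%:R != 0 :> R. Proof. by rewrite pnatr_eq0 -lt0n. Qed.

Lemma mean_shift (x : 'I_N -> R) (t : R) : mean (fun i => x i + t) = mean x + t.
Proof. by rewrite /mean big_split sumr_const card_ord /= -mulr_natr; field. Qed.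

Lemma sum_sub_mean (x : 'I_N -> R) : \sum_i (x i - mean x) = 0.
Proof. by rewrite sumrB sumr_const card_ord -mulr_natr /mean; field. Qed.

Lemma mean_in_open_unit (x : 'I_N -> R) :
  (forall i, 0 < x i < 1) -> 0 < mean x < 1.
Proof.
move=> x01.
have lt_sum (F G : 'I_N -> R) :
    (forall i, F i < G i) -> \sum_i F i < \sum_i G i.
  move=> FG; apply: (@ltr_sum _ _ _ xpredT) => //.
  by apply/hasP; exists (Ordinal N_gt0); rewrite ?mem_index_enum.
have x_gt0 i : 0 < x i by case/andP: (x01 i).
have x_lt1 i : x i < 1 by case/andP: (x01 i).
have sum_gt0 := lt_sum (fun=> 0) x x_gt0; rewrite big1_eq in sum_gt0.
have sum_ltN := lt_sum x (fun=> 1) x_lt1; rewrite sumr_const card_ord in sum_ltN.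
by rewrite /mean divr_gt0 ?ltr0n // ltr_pdivrMr ?ltr0n // mul1r.
Qed.

End Mean.

Definition shift_param (R : realType) (N : nat) (b : 'I_N -> R) (t : R) :
  param R N :=
  (fun i => b i + t, fun _ => 0).

Lemma nondegenerate_nonconst_shifts (R : realType) (N : nat)
    (Theta : param R N -> Prop) :
  (1 < N)%N -> nondegenerate_param Theta ->
  exists b : 'I_N -> R, exists2 d : R, 0 < d &
    (exists i j, b i != b j) /\ forall t, `|t| < d -> Theta (shift_param b t).
Proof.
move=> N_gt1 [p0 [e [e_gt0 ball]]].
pose i0 : 'I_N := Ordinal (ltnW N_gt1); pose i1 : 'I_N := Ordinal N_gt1.
have [b [b_nonconst b_near]] : exists b : 'I_N -> R,
    (exists i j, b i != b j) /\ forall i, `|b i - p0 i| <= e / 2.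
  case: (eqVneq (p0 i0) (p0 i1)) => [p0_01 | p0_01]; last first.
    by exists p0; split; [exists i0, i1 | move=> i; rewrite subrr normr0; lra].
  exists (fun i => p0 i + (i == i0)%:R * (e / 2)); split.
    exists i0, i1; rewrite eqxx p0_01 /=.
    by rewrite mul1r mul0r addr0 -subr_eq0 addrAC subrr add0r; apply/eqP; lra.
  move=> i; have e2_ge0 : 0 <= e / 2 by lra.
  rewrite addrAC subrr add0r normrM (ger0_norm e2_ge0) ger0_norm ?ler0n //.
  by case: (i == i0); rewrite ?mul1r ?mul0r; lra.
exists b, (e / 2); first lra.
split=> // t t_lt; apply: ball => i /=.
rewrite addrAC; apply: le_lt_trans (ler_normD _ _) _.
by have := b_near i; lra.
Qed.

Lemma shift_in_open_unit (R : realFieldType) (N : nat) (b : 'I_N -> R) (d t : R) :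
  (forall s, `|s| < d -> forall i, 0 <= b i + s <= 1) ->
  `|t| < d / 2 -> forall i, 0 < b i + t < 1.
Proof.
move=> b01 /ltr_normlP[t_gt t_lt] i.
have /andP[lo _] : 0 <= b i + (t - d / 2) <= 1 by apply: b01; rewrite ltr_norml; lra.
have /andP[_ hi] : 0 <= b i + (t + d / 2) <= 1 by apply: b01; rewrite ltr_norml; lra.
apply/andP; split; lra.
Qed.

Section ShiftFamily.
Variables (R : realType) (N : nat) (b : 'I_N -> R).
Hypothesis N_gt0 : (0 < N)%N.

Definition shiftX (c : R) : {poly R} := c%:P + 'X.

Definition pair_pmf0_poly (c : R) (x y : bool) : {poly R} :=
  match x, y with
  | true, true => shiftX c ^+ 2
  | false, false => (1 - shiftX c) ^+ 2
  | _, _ => shiftX c * (1 - shiftX c)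
  end.

Lemma horner_pair_pmf0_poly c x y t :
  (pair_pmf0_poly c x y).[t] = pair_pmf (c + t) 0 x y.
Proof.
by case: x; case: y; rewrite /= !hornerE ?mul0r ?addr0 ?subr0 ?mul1r.
Qed.

Definition expect_poly (S : sample N -> R) : {poly R} :=
  \sum_z S z *: \prod_i pair_pmf0_poly (b i) (z.1 i) (z.2 i).

Lemma horner_expect_poly S t : (expect_poly S).[t] = expect (shift_param b t) S.
Proof.
rewrite horner_sum; apply: eq_bigr => z _; rewrite hornerZ horner_prod.
by congr (_ * _); apply: eq_bigr => i _; rewrite horner_pair_pmf0_poly.
Qed.

Definition pq_sum_poly : {poly R} := \sum_i shiftX (b i) * (1 - shiftX (b i)).

Definition mean_pq_poly : {poly R} :=
  N%:R *: (shiftX (mean b) * (1 - shiftX (mean b))).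

Lemma horner_pq_sum_poly t :
  pq_sum_poly.[t] = \sum_i (b i + t) * (1 - (b i + t)).
Proof.
rewrite horner_sum; apply: eq_bigr => i _.
by rewrite !(hornerM, hornerD, hornerN, hornerC, hornerX).
Qed.

Lemma horner_mean_pq_poly t :
  mean_pq_poly.[t] = N%:R * ((mean b + t) * (1 - (mean b + t))).
Proof. by rewrite hornerZ !(hornerM, hornerD, hornerN, hornerC, hornerX). Qed.

Lemma total_corr_shift conv t : (forall i, 0 < b i + t < 1) ->
  total_corr conv (shift_param b t) * mean_pq_poly.[t]
  = mean_pq_poly.[t] - pq_sum_poly.[t].
Proof.
move=> bt01; have mu_t : mu (shift_param b t) = mean b + t := mean_shift N_gt0 b t.
have /andP[mu_gt0 mu_lt1] : 0 < mean b + t < 1.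
  by rewrite -mean_shift //; apply: mean_in_open_unit.
have N_neq0 : N%:R != 0 :> R by rewrite pnatr_eq0 -lt0n.
rewrite /total_corr mu_t mu_gt0 mu_lt1 horner_mean_pq_poly horner_pq_sum_poly /=.
under eq_bigr do rewrite subr0 mul1r.
by field; rewrite N_neq0 andbT; apply/andP; split; apply/eqP; lra.
Qed.

Lemma mean_pq_poly_root : mean_pq_poly.[- mean b] = 0.
Proof. by rewrite horner_mean_pq_poly subrr mul0r mulr0. Qed.

Lemma horner_pq_sum_at_mean :
  pq_sum_poly.[- mean b] = - \sum_i (b i - mean b) ^+ 2.
Proof.
rewrite horner_pq_sum_poly.
under eq_bigr do rewrite mulrBr mulr1 -expr2.
by rewrite sumrB sum_sub_mean // sub0r.
Qed.

End ShiftFamily.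

Theorem theorem5 (R : realType) (N : nat) (Theta : param R N -> Prop)
  (conv : param R N -> R) :
  (1 < N)%N ->
  (forall th, Theta th -> Rspace th) ->
  nondegenerate_param Theta ->
  (forall th, 0 <= conv th <= 1) ->
  ~ (exists S : sample N -> R,
       forall th, Theta th -> expect th S = total_corr conv th).
Proof.
move=> N_gt1 Theta01 nondeg _ [S unbiased].
have N_gt0 : (0 < N)%N := ltnW N_gt1.
have [b [d d_gt0 [[i [j b_ij]] shifts]]] :=
  nondegenerate_nonconst_shifts N_gt1 nondeg.
have b01 t : `|t| < d / 2 -> forall k, 0 < b k + t < 1.
  by apply: shift_in_open_unit => s s_lt k; exact: (Theta01 _ (shifts s s_lt) k).1.
pose Q := expect_poly b S * mean_pq_poly b - mean_pq_poly b + pq_sum_poly b.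
have Q0 : Q = 0.
  apply: (@poly_eq0_near0 _ _ (d / 2)) => [|t t_lt]; first by rewrite divr_gt0.
  rewrite !(hornerD, hornerN, hornerM) horner_expect_poly unbiased; last first.
    by apply: shifts; rewrite (lt_trans t_lt) // ltr_pdivrMr // ltr_pMr ?ltr1n.
  by rewrite total_corr_shift //; [ring | exact: b01].
have : Q.[- mean b] = 0 by rewrite Q0 horner0.
rewrite !(hornerD, hornerN, hornerM) mean_pq_poly_root mulr0 subr0 add0r.
rewrite horner_pq_sum_at_mean // => /eqP; rewrite oppr_eq0 => /eqP b_const.
move: b_ij; rewrite (sum_sqr_sub_eq0 b_const i) (sum_sqr_sub_eq0 b_const j).
by rewrite eqxx.
Qed.
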